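(* Let $G$ be a graph, $B\subseteq V(G)$ and $\ell\ge 1$. Then $B$ is a specified $\ell$-leaky forcing set of $G$ if and only if $B$ is an $(\ell-1)$-leaky forcing set of $G$ such that for every set $L\subseteq V(G)$ of $\ell-1$ vertex leaks and every $v\in V(G)\setminus B$ there exist forces $x\to v$ and $y\to v$ in $\mathcal{F}_L(B)$ with $x\neq y$.
   Context: All graphs are finite, simple and undirected. Zero forcing: a blue vertex $u$ with exactly one white neighbor $w$ may force $w$ (color it blue), written $u\to w$. From an initial blue set $B$, a forcing sequence is a chronologically ordered list of forces each valid when performed. A vertex leak is a vertex not allowed to perform any force; $B$ is an $\ell$-leaky forcing set if for every set of at most $\ell$ vertex leaks, exhaustively applying the forcing rule from $B$ (leaks never forcing) colors all of $V(G)$ blue. For $L\subseteq V(G)$, $\mathcal{F}_L(B)$ is the set of all forces $x\to v$ occurring in some forcing sequence from $B$ in which no vertex of $L$ performs a force. A specified leak is an ordered pair $v\to u$ of vertices indicating that $v$ is prohibited from forcing $u$. $B$ is a specified $\ell$-leaky forcing set if for every set of at most $\ell$ specified leaks, exhaustively applying the forcing rule from $B$ while never performing a prohibited force colors all of $V(G)$ blue. *)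

(* A finite simple graph is a symmetric irreflexive relation
   [adj : rel T] on a finite type [T]. *)
From mathcomp Require Import all_boot all_order.
Set Implicit Arguments. Unset Strict Implicit. Unset Printing Implicit Defensive.

Section ZeroForcing.
Variables (T : finType) (adj : rel T).

(* [ok u w] says whether the force u -> w is permitted (encodes leaks). *)
Definition valid_force (ok : T -> T -> bool) (S : {set T}) (u w : T) : bool :=
  [&& u \in S, w \notin S, adj u w, ok u w &
      [forall z, (adj u z && (z \notin S)) ==> (z == w)]].

Fixpoint valid_seq (ok : T -> T -> bool) (S : {set T}) (s : seq (T * T)) : bool :=
  match s with
  | [::] => true
  | (u, w) :: s' => valid_force ok S u w && valid_seq ok (w |: S) s'
  end.

Definition blue_after (S : {set T}) (s : seq (T * T)) : {set T} :=
  S :|: [set x | x \in map snd s].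

Definition stalled (ok : T -> T -> bool) (S : {set T}) : bool :=
  ~~ [exists u, exists w, valid_force ok S u w].

Definition forces_all (ok : T -> T -> bool) (B : {set T}) : Prop :=
  forall s, valid_seq ok B s -> stalled ok (blue_after B s) ->
    blue_after B s = [set: T].

Definition vertex_leak_ok (L : {set T}) : T -> T -> bool :=
  fun u _ => u \notin L.

Definition leaky_forcing_set (B : {set T}) (l : nat) : Prop :=
  forall L : {set T}, #|L| <= l -> forces_all (vertex_leak_ok L) B.

Definition specified_leaky_forcing_set (B : {set T}) (l : nat) : Prop :=
  forall SL : {set T * T}, #|SL| <= l ->
    forces_all (fun u w => (u, w) \notin SL) B.

Definition in_FL (L B : {set T}) (x v : T) : Prop :=
  exists2 s, valid_seq (vertex_leak_ok L) B s & (x, v) \in s.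

End ZeroForcing.

From mathcomp Require Import all_boot all_order.
Set Implicit Arguments. Unset Strict Implicit. Unset Printing Implicit Defensive.

(* Fix a final coloring C reached by a stalled forcing process, and let
   [forces_at C] be the forces that the plain zero-forcing rule would still
   allow at C.  Each vertex has at most one such force, so forbidding those
   forces costs as many specified leaks as there are forcing vertices.

   (=>) A specified [l]-leaky set even survives any mixture of [|L|] vertex
   leaks and [|E|] specified leaks with [|L| + |E| <= l] ([mixed_leaks]): a
   stalled mixed process is a stalled specified process once every force
   still available to a leaked vertex is declared a specified leak.  With
   [E] empty this gives [(l-1)]-leakiness; with [E = {x -> v}] for a first
   forcer [x] of [v] it yields a second forcer [y <> x].
   (<=) If a process with [l] specified leaks stalls at C, the vertices able
   to force at C number at most [l].  If fewer, declaring them vertex leaks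
   confines every process to C ([stalled_confines]), so C is everything.
   If exactly [l], leaking all but one, [a -> b], leaves [a] as the only
   possible forcer of [b] ([sole_forcer]), contradicting the two forcers. *)

Section ZeroForcingFacts.
Variables (T : finType) (adj : rel T).

Definition no_leaks (u w : T) : bool := true.

Definition forces_at (S : {set T}) : {set T * T} :=
  [set p | valid_force adj no_leaks S p.1 p.2].

Lemma valid_forceE ok S u w :
  valid_force adj ok S u w = ((u, w) \in forces_at S) && ok u w.
Proof.
by rewrite inE /valid_force /no_leaks; case: (ok u w); rewrite ?andbT ?andbF.
Qed.

Lemma forces_at_target_unique S u w w' :
  (u, w) \in forces_at S -> (u, w') \in forces_at S -> w = w'.
Proof.
rewrite !inE /= => /and5P[_ _ _ _ /forallP only_w] /and5P[_ w'S auw' _ _].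
by have := only_w w'; rewrite auw' w'S => /eqP.
Qed.

Lemma valid_force_mono ok (S C : {set T}) u w :
  valid_force adj ok S u w -> S \subset C -> w \notin C ->
  valid_force adj ok C u w.
Proof.
case/and5P=> uS _ auw okuw /forallP onlyw SC wC; apply/and5P; split=> //.
  exact: (subsetP SC).
apply/forallP=> z; apply/implyP=> /andP[auz zC]; have := onlyw z.
by rewrite auz (contra (subsetP SC z) zC).
Qed.

Lemma blue_after_nil (S : {set T}) : blue_after S [::] = S.
Proof. by apply/setP=> x; rewrite !inE orbF. Qed.

Lemma blue_after_cons (S : {set T}) u w s :
  blue_after S ((u, w) :: s) = blue_after (w |: S) s.
Proof. by apply/setP=> x; rewrite !inE /= orbCA orbA. Qed.

Lemma valid_seq_ok_mono (ok ok' : T -> T -> bool) S s :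
  (forall u w, ok u w -> ok' u w) ->
  valid_seq adj ok S s -> valid_seq adj ok' S s.
Proof.
move=> okok'; elim: s S => [|[u w] s IH] S //= /andP[vf /IH ->].
by rewrite andbT !valid_forceE in vf *; case/andP: vf => -> /okok'.
Qed.

Lemma valid_seq_ok ok S s u w :
  valid_seq adj ok S s -> (u, w) \in s -> ok u w.
Proof.
elim: s S => [|[u' w'] s IH] S //= /andP[/and5P[_ _ _ okuw _] /IH IHs].
by rewrite in_cons => /orP[/eqP[-> ->] //|/IHs].
Qed.

Lemma valid_seq_target_white ok S s u w :
  valid_seq adj ok S s -> (u, w) \in s -> w \notin S.
Proof.
elim: s S => [|[u' w'] s IH] S //= /andP[/and5P[_ w'S _ _ _] /IH IHs].
rewrite in_cons => /orP[/eqP[_ ->] //|/IHs]; apply: contra => wS.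
by rewrite inE wS orbT.
Qed.

Lemma forcer_unique ok S s x y v :
  valid_seq adj ok S s -> (x, v) \in s -> (y, v) \in s -> x = y.
Proof.
elim: s S => [|[u w] s IH] S //= /andP[_ vs].
have white_later z : (z, w) \in s -> False.
  by move/(valid_seq_target_white vs); rewrite setU11.
rewrite !in_cons => /orP[/eqP[-> ->]|xv] /orP[/eqP[->]|yv] //.
- by case: (white_later _ yv).
- by move=> vw; move: xv; rewrite vw => /white_later.
- exact: IH vs xv yv.
Qed.

Lemma exists_stalled_seq ok (S : {set T}) :
  exists2 s, valid_seq adj ok S s & stalled adj ok (blue_after S s).
Proof.
have [n] := ubnP #|~: S|; elim: n S => // n IH S ltSn.
have [st|] := boolP (stalled adj ok S).
  by exists [::]; rewrite ?blue_after_nil.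
rewrite negbK => /existsP[u /existsP[w vf]].
have wS : w \notin S by case/and5P: vf.
have ltwS : #|~: (w |: S)| < n.
  rewrite -ltnS (leq_trans _ ltSn) // ltnS.
  by rewrite (cardsD1 w (~: S)) inE wS setCU setIC -setDE add1n.
have [s vs st] := IH _ ltwS; exists ((u, w) :: s); first by rewrite /= vf.
by rewrite blue_after_cons.
Qed.

Lemma forcer_exists ok B v :
  forces_all adj ok B -> v \notin B ->
  exists x, exists2 s, valid_seq adj ok B s & (x, v) \in s.
Proof.
move=> allB vB; have [s vs st] := exists_stalled_seq ok B.
have := in_setT v; rewrite -(allB s vs st) inE (negbTE vB) inE.
by case/mapP=> -[x v'] xv /= ->; exists x, s.
Qed.

Lemma escape ok (S C : {set T}) s x v :
  S \subset C -> valid_seq adj ok S s -> (x, v) \in s -> v \notin C ->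
  exists2 p, p \in s & valid_force adj ok C p.1 p.2.
Proof.
elim: s S => [|[u w] s IH] S //= SC /andP[vf vs].
have [wC|wC] := boolP (w \in C); last first.
  by move=> _ _; exists (u, w); rewrite ?mem_head ?(valid_force_mono vf SC).
rewrite in_cons => /orP[/eqP[_ vw]|xv vC]; first by rewrite vw wC.
have [|p ps vfp] := IH (w |: S) _ vs xv vC; first by rewrite subUset sub1set wC.
by exists p; rewrite // in_cons ps orbT.
Qed.

Lemma stalled_confines ok (S C : {set T}) s :
  S \subset C -> stalled adj ok C -> valid_seq adj ok S s ->
  blue_after S s \subset C.
Proof.
move=> SC st vs; apply/subsetP=> v; rewrite inE => /orP[/(subsetP SC)//|].
rewrite inE => /mapP[[x v'] xv /= ->]; apply: contraT => vC.
have [p _ vfp] := escape SC vs xv vC.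
by case/existsP: st; exists p.1; apply/existsP; exists p.2.
Qed.

Lemma sole_forcer ok (S C : {set T}) s a b x :
  S \subset C -> b \notin C ->
  (forall u w, valid_force adj ok C u w -> (u, w) = (a, b)) ->
  valid_seq adj ok S s -> (x, b) \in s -> x = a.
Proof.
move=> SC bC only_ab vs xb; have [[u w] uws vfuw] := escape SC vs xb bC.
by move: uws; rewrite (only_ab _ _ vfuw) => ab; apply: forcer_unique vs xb ab.
Qed.

Lemma stalled_forces_at ok C u w :
  stalled adj ok C -> (u, w) \in forces_at C -> ~~ ok u w.
Proof.
move=> /existsPn/(_ u)/existsPn/(_ w); rewrite valid_forceE => nvf uw.
by apply: contra nvf => okuw; rewrite uw okuw.
Qed.

Lemma mixed_leaks B l (L : {set T}) (E : {set T * T}) ok :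
  specified_leaky_forcing_set adj B l -> #|L| + #|E| <= l ->
  (forall u w, ok u w = (u \notin L) && ((u, w) \notin E)) ->
  forces_all adj ok B.
Proof.
move=> specB cardLE okE s vs st; set C := blue_after B s.
pose FL := forces_at C :&: [set p | p.1 \in L].
have cardFL : #|FL| <= #|L|.
  have inj : {in FL &, injective fst}.
    move=> [u w] [u' w']; rewrite !in_setI => /andP[uw _] /andP[u'w' _] /= eu.
    by subst u'; rewrite (forces_at_target_unique uw u'w').
  rewrite -(card_in_imset inj); apply/subset_leq_card/subsetP=> u.
  by case/imsetP=> -[u' w]; rewrite !inE /= => /andP[_ uL] ->.
apply: (specB (FL :|: E)).
- by rewrite (leq_trans (leq_card_setU _ _)) // (leq_trans _ cardLE) ?leq_add2r.
- apply: valid_seq_ok_mono vs => u w; rewrite okE => /andP[uL uwE].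
  by rewrite !inE /= negb_or uwE (negbTE uL) andbF.
apply/existsPn=> u; apply/existsPn=> w; rewrite valid_forceE.
apply/negP=> /andP[uw]; rewrite in_setU in_setI uw !inE /= negb_or.
move=> /andP[uL uwE].
by have := stalled_forces_at st uw; rewrite okE uwE uL.
Qed.

Lemma specified_is_vertex_leaky B l :
  specified_leaky_forcing_set adj B l -> leaky_forcing_set adj B l.
Proof.
move=> specB L cardL; apply: (mixed_leaks (L := L) (E := set0) specB) => [|u w].
  by rewrite cards0 addn0.
by rewrite inE andbT.
Qed.

(* The forward direction: one vertex leak may be traded for a specified leak
   on the first forcer of [v], so [v] has a second forcer. *)
Lemma second_forcer B l (L : {set T}) v :
  1 <= l -> specified_leaky_forcing_set adj B l -> #|L| <= l.-1 ->
  v \notin B -> exists x y, [/\ x != y, in_FL adj L B x v & in_FL adj L B y v].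
Proof.
move=> l_gt0 specB cardL vB.
have L_leaky := specified_is_vertex_leaky specB (leq_trans cardL (leq_pred l)).
have [x [s vs xv]] := forcer_exists L_leaky vB.
pose ok u w := (u \notin L) && ((u, w) \notin [set (x, v)]).
have ok_leaky : forces_all adj ok B.
  apply: (mixed_leaks specB) => // ; rewrite cards1 addn1.
  by rewrite -(prednK l_gt0) ltnS.
have [y [s' vs' yv]] := forcer_exists ok_leaky vB.
exists x, y; split; last 2 first.
- by exists s.
- by exists s' => //; apply: valid_seq_ok_mono vs' => u w /andP[].
have /andP[_] := valid_seq_ok vs' yv.
by rewrite inE eq_sym; apply: contra => /eqP ->.
Qed.

Definition forcers (C : {set T}) : {set T} := [set p.1 | p in forces_at C].

(* If the forcers of a coloring C containing B are few enough to be declared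
   vertex leaks, then no leaky process leaves C, so C is everything. *)
Lemma few_forcers_all_blue (B C : {set T}) l :
  leaky_forcing_set adj B l -> B \subset C -> #|forcers C| <= l ->
  C = [set: T].
Proof.
move=> leakyB BC cardP.
have stP : stalled adj (vertex_leak_ok (forcers C)) C.
  apply/existsPn=> u; apply/existsPn=> w; rewrite valid_forceE /vertex_leak_ok.
  by apply/negP=> /andP[uw]; rewrite (imset_f fst uw).
have [s vs st] := exists_stalled_seq (vertex_leak_ok (forcers C)) B.
apply/eqP; rewrite eqEsubset subsetT -(leakyB _ cardP s vs st).
exact: stalled_confines BC stP vs.
Qed.

Lemma last_forcer_sole (B C : {set T}) a b x :
  B \subset C -> (a, b) \in forces_at C ->
  in_FL adj (forcers C :\ a) B x b -> x = a.
Proof.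
move=> BC ab [s vs xb]; apply: sole_forcer BC _ _ vs xb.
  by move: ab; rewrite inE => /and3P[].
move=> u w; rewrite valid_forceE /vertex_leak_ok in_setD1 negb_and negbK.
case/andP=> uw /orP[/eqP ua|]; last by rewrite (imset_f fst uw).
by subst u; rewrite (forces_at_target_unique uw ab).
Qed.

End ZeroForcingFacts.

Theorem theorem3p1 (T : finType) (adj : rel T)
  (adj_sym : symmetric adj) (adj_irr : irreflexive adj)
  (B : {set T}) (l : nat) (hl : 1 <= l) :
  specified_leaky_forcing_set adj B l <->
  (leaky_forcing_set adj B l.-1 /\
   forall L : {set T}, #|L| <= l.-1 ->
   forall v, v \notin B ->
     exists x y, [/\ x != y, in_FL adj L B x v & in_FL adj L B y v]).
Proof.
split=> [specB | [leakyB two_forcers] SL cardSL s vs st].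
  split=> [L cardL | L cardL v vB]; last exact: second_forcer hl specB cardL vB.
  exact: (specified_is_vertex_leaky specB (leq_trans cardL (leq_pred l))).
set C := blue_after B s; have BC : B \subset C by apply: subsetUl.
(* Every force still possible at C is one of the [l] specified leaks. *)
have cardP : #|forcers adj C| <= l.
  apply: leq_trans (leq_imset_card _ _) (leq_trans (subset_leq_card _) cardSL).
  by apply/subsetP=> -[u w] uw; have := stalled_forces_at st uw; rewrite negbK.
have [few | many] := leqP #|forcers adj C| l.-1.
  exact: few_forcers_all_blue leakyB BC few.
(* Exactly [l] forcers: leak all but one, [a -> b], and [b] has one forcer. *)
have /card_gt0P[_ /imsetP[[a b] ab _]] : 0 < #|forcers adj C|.
  exact: leq_ltn_trans many.
have cardL : #|forcers adj C :\ a| <= l.-1.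
  move: cardP; rewrite (cardsD1 a) (imset_f fst ab) add1n.
  by rewrite -(prednK hl) ltnS.
have bB : b \notin B.
  by apply: contra (subsetP BC b) _; move: ab; rewrite inE => /and3P[].
have [x [y [xy /(last_forcer_sole BC ab) xa /(last_forcer_sole BC ab) ya]]] :=
  two_forcers _ cardL b bB.
by rewrite xa ya eqxx in xy.
Qed.
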